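(* Let $w=w_1\cdots w_N$ be a 132-avoiding sorting network of $\mathfrak S_n$ and let $1\le i<j\le n$. Then the (unique) step $k$ at which the values $i$ and $j$ are interchanged, i.e. at which $\sigma_k$ is obtained from $\sigma_{k-1}$ by swapping the adjacent entries $i$ and $j$, satisfies $w_k=j-i$.
   Context: $N=\binom n2$, $s_i=(i,i+1)$, $w_0$ the reverse permutation $w_0(i)=n+1-i$. A sorting network is a word $w_1\cdots w_N$ over $[n-1]$ with $s_{w_1}\cdots s_{w_N}=w_0$; intermediate permutations $\sigma_0=\mathrm{id}$, $\sigma_k=s_{w_1}\cdots s_{w_k}$, where in one-line notation $\sigma_k$ is obtained from $\sigma_{k-1}$ by swapping the entries in positions $w_k$ and $w_k+1$. It is 132-avoiding if every $\sigma_k$ avoids the pattern 132. In a sorting network each pair of values is swapped exactly once. *)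

From mathcomp Require Import all_boot.
Set Implicit Arguments. Unset Strict Implicit. Unset Printing Implicit Defensive.

(* Permutations of [1..n] in one-line notation as sequences of nat.
   Positions are 1-indexed: entry at position a is nth 0 p (a-1). *)
Definition entry (p : seq nat) (a : nat) : nat := nth 0 p a.-1.

Definition swap_adj (p : seq nat) (a : nat) : seq nat :=
  set_nth 0 (set_nth 0 p a.-1 (entry p a.+1)) a (entry p a).

Definition sigma (n : nat) (w : seq nat) (k : nat) : seq nat :=
  foldl swap_adj (iota 1 n) (take k w).

Definition sorting_network (n : nat) (w : seq nat) : Prop :=
  size w = 'C(n, 2) /\ all (fun a => (1 <= a) && (a <= n.-1)) w /\
  sigma n w (size w) = rev (iota 1 n).

Definition contains132 (p : seq nat) : Prop :=
  exists a b c, [/\ a < b, b < c, c < size p &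
    nth 0 p a < nth 0 p c < nth 0 p b].

Definition avoids132 (p : seq nat) : Prop := ~ contains132 p.

Definition avoiding132_network (n : nat) (w : seq nat) : Prop :=
  sorting_network n w /\ forall k, k <= size w -> avoids132 (sigma n w k).

Definition swaps_at (n : nat) (w : seq nat) (k i j : nat) : Prop :=
  let p := sigma n w k.-1 in
  let a := nth 0 w k.-1 in
  (entry p a = i /\ entry p a.+1 = j) \/ (entry p a = j /\ entry p a.+1 = i).

From mathcomp Require Import all_boot zify.
Set Implicit Arguments. Unset Strict Implicit. Unset Printing Implicit Defensive.

(** A sorting network has ['C(n, 2)] steps, each creating at most one
    inversion, and [w_0] has ['C(n, 2)] inversions; so every step turns an
    ascent into a descent. Hence [i] and [j] are swapped at a step [k] where
    they occupy the 0-indexed positions [q := w_k - 1] and [w_k] of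
    [sigma_(k-1)]. The 132 condition forces the first [q] entries of
    [sigma_(k-1)] to be exactly the values strictly between [i] and [j]: a
    smaller value [v] there gives the pattern [v j i] right after the swap, a
    larger value [v] there must have overtaken [i] earlier, when [i v j] was a
    132, and a value strictly between them placed after [j] gives [i j v].
    Hence [q = j - i - 1]. *)

Fixpoint swap_next (T : Type) (q : nat) (s : seq T) : seq T :=
  match q, s with
  | 0, x :: y :: t => y :: x :: t
  | q'.+1, x :: t => x :: swap_next q' t
  | _, _ => s
  end.

Definition tswap (q r : nat) : nat :=
  if r == q then q.+1 else if r == q.+1 then q else r.

Ltac tswap_lia :=
  rewrite /tswap; repeat case: ifP => [/eqP ?|/negbT/eqP ?]; lia.

Lemma tswapS q r : tswap q.+1 r.+1 = (tswap q r).+1.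
Proof. by rewrite /tswap !eqSS; case: (r == q); case: (r == q.+1). Qed.

Lemma tswapK q : involutive (tswap q).
Proof.
move=> r; rewrite {2}/tswap.
by case: (r =P q) => [->|?]; [|case: (r =P q.+1) => [->|?]]; tswap_lia.
Qed.

Lemma tswap_id q r : r != q -> r != q.+1 -> tswap q r = r.
Proof. by move=> /negbTE hq /negbTE hq1; rewrite /tswap hq hq1. Qed.

Lemma tswap_l q : tswap q q = q.+1.
Proof. by rewrite /tswap eqxx. Qed.

Lemma tswap_r q : tswap q q.+1 = q.
Proof. by rewrite /tswap (gtn_eqF (ltnSn q)) eqxx. Qed.

Lemma tswap_ltn q r m : q.+1 < m -> (tswap q r < m) = (r < m).
Proof. move=> ?; tswap_lia. Qed.

Lemma tswap_inverted q a b : a < b -> tswap q b < tswap q a -> a = q /\ b = q.+1.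
Proof. move=> ?; tswap_lia. Qed.

Section SwapNext.
Variable T : Type.

Lemma size_swap_next q (s : seq T) : size (swap_next q s) = size s.
Proof. by elim: q s => [|q IH] [|x [|y t]] //=; rewrite IH. Qed.

Lemma nth_swap_next x0 q (s : seq T) r : q.+1 < size s ->
  nth x0 (swap_next q s) r = nth x0 s (tswap q r).
Proof.
elim: q s r => [|q IH] [|x [|y t]] //= r lt_q_s; first by case: r => [|[|r]].
by case: r => [|r]; [rewrite /tswap | rewrite tswapS /= (IH (y :: t))].
Qed.

End SwapNext.

Lemma perm_swap_next (T : eqType) q (s : seq T) : perm_eq (swap_next q s) s.
Proof.
elim: q s => [|q IH] [|x t] //=; last by rewrite perm_cons IH.
by case: t => [|y t] //=; apply/permP => a /=; rewrite addnCA.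
Qed.

Lemma index_swap_next (T : eqType) q (s : seq T) c : uniq s -> q.+1 < size s ->
  index c (swap_next q s) = tswap q (index c s).
Proof.
move=> uniq_s lt_q_s.
have uniq_sw : uniq (swap_next q s) by rewrite (perm_uniq (perm_swap_next q s)).
case: (boolP (c \in s)) => cs; last first.
  rewrite !memNindex ?(perm_mem (perm_swap_next q s)) ?size_swap_next //.
  by rewrite tswap_id //; lia.
have lt_c_s : index c s < size s by rewrite index_mem.
rewrite -{1}(nth_index c cs) -{1}(tswapK q (index c s)) -nth_swap_next //.
by rewrite index_uniq // size_swap_next tswap_ltn.
Qed.

Lemma swap_adjE p a : 0 < a < size p -> swap_adj p a = swap_next a.-1 p.
Proof.
case: a => // q /= lt_q_p; apply: (@eq_from_nth _ 0).
  by rewrite size_swap_next !size_set_nth; lia.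
move=> r _; rewrite nth_swap_next // !nth_set_nth /= /entry /= /tswap.
case: (r =P q.+1) => [->|?]; first by rewrite ifF ?eqxx //; lia.
by case: (r =P q) => [->|?]; rewrite nth_set_nth /= ?eqxx //; case: (r =P q).
Qed.

Fixpoint inversions (s : seq nat) : nat :=
  if s is x :: t then count (fun y => y < x) t + inversions t else 0.

Lemma inversions_swap_next q s : q.+1 < size s ->
  inversions (swap_next q s) + (nth 0 s q.+1 < nth 0 s q) =
  inversions s + (nth 0 s q < nth 0 s q.+1).
Proof.
elim: q s => [|q IH] [|x [|y t]] //= lt_q_s; first by case: (ltngtP x y) => /=; lia.
rewrite -addnA (IH (y :: t)) // addnA (permP (perm_swap_next q (y :: t))).
by rewrite addnAC.
Qed.

Lemma inversions_iota m k : inversions (iota m k) = 0.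
Proof.
elim: k m => //= k IH m; rewrite IH addn0; apply/eqP; rewrite -leqn0 leqNgt.
by rewrite -has_count; apply/hasPn => y; rewrite mem_iota; lia.
Qed.

Lemma inversions_rev_iota n : inversions (rev (iota 1 n)) = 'C(n, 2).
Proof.
elim: n => // n IH.
have -> : iota 1 n.+1 = rcons (iota 1 n) n.+1.
  by rewrite -cats1 -(addn1 n) iotaD add1n addn1.
rewrite rev_rcons /= IH binS bin1.
have : all (fun y => y < n.+1) (iota 1 n).
  by apply/allP => y; rewrite mem_iota; lia.
by rewrite all_count count_rev size_iota => /eqP ->; rewrite addnC.
Qed.

Lemma sigma0 n w : sigma n w 0 = iota 1 n.
Proof. by rewrite /sigma take0. Qed.

Lemma sigmaS n w k : k < size w ->
  sigma n w k.+1 = swap_adj (sigma n w k) (nth 0 w k).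
Proof. by move=> lt_k_w; rewrite /sigma (take_nth 0 lt_k_w) foldl_rcons. Qed.

Lemma index_iota m k c : m <= c < m + k -> index c (iota m k) = c - m.
Proof.
move=> c_range; have nth_c : nth 0 (iota m k) (c - m) = c by rewrite nth_iota; lia.
by rewrite -{1}nth_c index_uniq ?iota_uniq ?size_iota; lia.
Qed.

Lemma index_rev_iota m k c : m <= c < m + k -> index c (rev (iota m k)) = m + k - c.+1.
Proof.
move=> c_range; have nth_c : nth 0 (rev (iota m k)) (m + k - c.+1) = c.
  by rewrite nth_rev size_iota ?nth_iota; lia.
by rewrite -{1}nth_c index_uniq ?rev_uniq ?iota_uniq ?size_rev ?size_iota; lia.
Qed.

Section SortingNetwork.
Variables (n : nat) (w : seq nat).
Hypothesis sort_w : sorting_network n w.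

Lemma letter_range k : k < size w -> 0 < nth 0 w k < n.
Proof.
case: sort_w => _ [/allP all_w _] lt_k_w.
have /andP[w_gt0 w_le] : 0 < nth 0 w k <= n.-1 := all_w _ (mem_nth 0 lt_k_w).
by rewrite -subn1 in w_le; lia.
Qed.

Lemma perm_sigma k : k <= size w -> perm_eq (sigma n w k) (iota 1 n).
Proof.
elim: k => [|k IH] lt_k_w; first by rewrite sigma0.
have /andP[w_gt0 w_lt] := letter_range lt_k_w.
have size_k : size (sigma n w k) = n by rewrite (perm_size (IH (ltnW lt_k_w))) size_iota.
rewrite sigmaS // swap_adjE ?size_k ?w_gt0 //.
exact: perm_trans (perm_swap_next _ _) (IH (ltnW lt_k_w)).
Qed.

Lemma size_sigma k : k <= size w -> size (sigma n w k) = n.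
Proof. by move=> le_k_w; rewrite (perm_size (perm_sigma le_k_w)) size_iota. Qed.

Lemma uniq_sigma k : k <= size w -> uniq (sigma n w k).
Proof. by move=> le_k_w; rewrite (perm_uniq (perm_sigma le_k_w)) iota_uniq. Qed.

Lemma mem_sigma k c : k <= size w -> (c \in sigma n w k) = (0 < c <= n).
Proof.
move=> le_k_w; rewrite (perm_mem (perm_sigma le_k_w)) mem_iota.
by apply/idP/idP; lia.
Qed.

Lemma nth_sigma_range k r : k <= size w -> r < n -> 0 < nth 0 (sigma n w k) r <= n.
Proof. by move=> le_k_w lt_rn; rewrite -(mem_sigma _ le_k_w) mem_nth ?size_sigma. Qed.

Lemma sigmaS_swap_next k : k < size w ->
  sigma n w k.+1 = swap_next (nth 0 w k).-1 (sigma n w k).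
Proof.
move=> lt_k_w; have /andP[w_gt0 w_lt] := letter_range lt_k_w.
by rewrite sigmaS // swap_adjE // w_gt0 size_sigma ?(ltnW lt_k_w).
Qed.

Lemma index_sigmaS k c : k < size w ->
  index c (sigma n w k.+1) = tswap (nth 0 w k).-1 (index c (sigma n w k)).
Proof.
move=> lt_k_w; have w_range := letter_range lt_k_w.
rewrite sigmaS_swap_next // index_swap_next ?uniq_sigma ?size_sigma ?(ltnW lt_k_w) //.
by case/andP: w_range => w_gt0 w_lt; rewrite prednK.
Qed.

Lemma nth_sigmaS k r : k < size w ->
  nth 0 (sigma n w k.+1) r = nth 0 (sigma n w k) (tswap (nth 0 w k).-1 r).
Proof.
move=> lt_k_w; have /andP[w_gt0 w_lt] := letter_range lt_k_w.
by rewrite sigmaS_swap_next // nth_swap_next // prednK // size_sigma ?(ltnW lt_k_w).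
Qed.

Lemma inversions_sigmaS k : k < size w ->
  let s := sigma n w k in let a := nth 0 w k in
  inversions (sigma n w k.+1) + (nth 0 s a < nth 0 s a.-1) =
  inversions s + (nth 0 s a.-1 < nth 0 s a).
Proof.
move=> lt_k_w /=; have /andP[w_gt0 w_lt] := letter_range lt_k_w.
rewrite sigmaS_swap_next //; move: w_gt0 w_lt; case: (nth 0 w k) => [//|q] _ w_lt.
by rewrite inversions_swap_next // size_sigma ?(ltnW lt_k_w).
Qed.

Lemma inversions_sigma_le k l : k <= l -> l <= size w ->
  inversions (sigma n w l) <= inversions (sigma n w k) + (l - k).
Proof.
move=> le_kl; elim: l le_kl => [|l IH]; first by rewrite leqn0 => /eqP-> _; rewrite addn0.
rewrite leq_eqVlt => /orP[/eqP-> _|lt_kl lt_l_w]; first by rewrite subnn addn0.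
have := IH lt_kl (ltnW lt_l_w); have := inversions_sigmaS lt_l_w => /=.
by case: (_ < _); case: (_ < _) => /=; lia.
Qed.

Lemma sigma_ascent k : k < size w ->
  nth 0 (sigma n w k) (nth 0 w k).-1 < nth 0 (sigma n w k) (nth 0 w k).
Proof.
move=> lt_k_w; case: (sort_w) => size_w [_ sigma_end].
apply/negPn/negP => descent.
have step_le : inversions (sigma n w k.+1) <= inversions (sigma n w k).
  by have := inversions_sigmaS lt_k_w => /=; rewrite (negbTE descent) addn0; lia.
have := inversions_sigma_le (ltnSn k) lt_k_w.
have := inversions_sigma_le (leq0n k) (ltnW lt_k_w).
have := inversions_sigma_le lt_k_w (leqnn (size w)).
rewrite sigma_end inversions_rev_iota sigma0 inversions_iota -size_w; lia.
Qed.

Lemma index_sigma_inj k x y : k <= size w -> 0 < x <= n -> 0 < y <= n ->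
  index x (sigma n w k) = index y (sigma n w k) -> x = y.
Proof.
move=> le_k_w x_range y_range eq_idx.
by rewrite -[x](@nth_index _ 0 _ (sigma n w k)) ?eq_idx ?nth_index ?mem_sigma.
Qed.

Lemma index_sigma_ltNgt k x y : k <= size w -> 0 < x <= n -> 0 < y <= n -> x != y ->
  (index x (sigma n w k) < index y (sigma n w k)) =
  ~~ (index y (sigma n w k) < index x (sigma n w k)).
Proof.
move=> le_k_w x_range y_range neq_xy; rewrite -leqNgt ltn_neqAle andb_idl //.
by move=> _; apply: contra neq_xy => /eqP/(index_sigma_inj le_k_w x_range y_range)->.
Qed.

Lemma index_sigmaS_inverted k x y : k < size w ->
  index x (sigma n w k) < index y (sigma n w k) ->
  index y (sigma n w k.+1) < index x (sigma n w k.+1) ->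
  index x (sigma n w k) = (nth 0 w k).-1 /\ index y (sigma n w k) = nth 0 w k.
Proof.
move=> lt_k_w lt_xy; rewrite !index_sigmaS // => /(tswap_inverted lt_xy)[-> ->].
by have /andP[w_gt0 _] := letter_range lt_k_w; rewrite prednK.
Qed.

Lemma inversion_persistent x y k l : 0 < x -> x < y -> y <= n -> k <= l -> l <= size w ->
  index y (sigma n w k) < index x (sigma n w k) ->
  index y (sigma n w l) < index x (sigma n w l).
Proof.
move=> x_gt0 lt_xy y_le le_kl; elim: l le_kl => [|l IH]; first by rewrite leqn0 => /eqP->.
rewrite leq_eqVlt => /orP[/eqP-> //|lt_kl lt_l_w inv_k].
have inv_l := IH lt_kl (ltnW lt_l_w) inv_k.
rewrite index_sigma_ltNgt //; try lia; apply/negP => inv_l1.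
have [idx_y idx_x] := index_sigmaS_inverted lt_l_w inv_l inv_l1.
have := sigma_ascent lt_l_w; rewrite -idx_y -idx_x !nth_index ?mem_sigma //; lia.
Qed.

Lemma inverting_step x y l : 0 < x -> x < y -> y <= n -> l <= size w ->
  index y (sigma n w l) < index x (sigma n w l) ->
  exists2 m, m < l &
    index x (sigma n w m) = (nth 0 w m).-1 /\ index y (sigma n w m) = nth 0 w m.
Proof.
move=> x_gt0 lt_xy y_le le_l_w inv_l.
pose inverted m := index y (sigma n w m) < index x (sigma n w m).
have [m inv_m min_m] := ex_minnP (ex_intro inverted l inv_l).
have le_ml : m <= l := min_m l inv_l.
case: m inv_m min_m le_ml => [|m] inv_m min_m le_ml.
  by move: inv_m; rewrite /inverted sigma0 !index_iota; lia.
exists m => //; apply: index_sigmaS_inverted => //; first lia.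
rewrite index_sigma_ltNgt; try lia.
by apply/negP => /min_m; rewrite ltnn.
Qed.

End SortingNetwork.

Section Avoiding132.
Variables (n : nat) (w : seq nat).
Hypotheses (sort_w : sorting_network n w)
  (avoid_w : forall k, k <= size w -> avoids132 (sigma n w k)).

Lemma sigma_no132 k a b c : k <= size w -> a < b -> b < c -> c < n ->
  ~ (nth 0 (sigma n w k) a < nth 0 (sigma n w k) c < nth 0 (sigma n w k) b).
Proof.
move=> le_k_w lt_ab lt_bc lt_cn pattern; apply: (avoid_w le_k_w).
by exists a, b, c; split; rewrite ?size_sigma.
Qed.

Variables (t i j : nat).
Hypotheses (lt_t_w : t < size w)
  (nth_i : nth 0 (sigma n w t) (nth 0 w t).-1 = i)
  (nth_j : nth 0 (sigma n w t) (nth 0 w t) = j).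

Local Notation p := (sigma n w t).
Local Notation q := (nth 0 w t).-1.

Let le_t_w : t <= size w := ltnW lt_t_w.

Let w_gt0 : 0 < nth 0 w t. Proof. by case/andP: (letter_range sort_w lt_t_w). Qed.
Let w_lt : nth 0 w t < n. Proof. by case/andP: (letter_range sort_w lt_t_w). Qed.

Let lt_ij : i < j.
Proof. by rewrite -nth_i -nth_j sigma_ascent. Qed.

Let i_gt0 : 0 < i.
Proof.
have lt_qn : q < n by rewrite prednK // (ltnW w_lt).
by have /andP[] := nth_sigma_range sort_w le_t_w lt_qn; rewrite nth_i.
Qed.

Let j_le : j <= n.
Proof. by have /andP[] := nth_sigma_range sort_w le_t_w w_lt; rewrite nth_j. Qed.

Lemma index_swapped_i : index i p = q.
Proof. by rewrite -nth_i index_uniq ?uniq_sigma ?size_sigma //; lia. Qed.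

Lemma index_swapped_j : index j p = q.+1.
Proof. by rewrite -nth_j index_uniq ?uniq_sigma ?size_sigma ?(prednK w_gt0). Qed.

Lemma nth_swapped_sigmaS_q : nth 0 (sigma n w t.+1) q = j.
Proof. by rewrite nth_sigmaS // tswap_l prednK. Qed.

Lemma nth_swapped_sigmaS_qS : nth 0 (sigma n w t.+1) q.+1 = i.
Proof. by rewrite nth_sigmaS // tswap_r. Qed.

Lemma index_swapped_other v : 0 < v <= n -> v != i -> v != j ->
  (index v p < q) || (q.+1 < index v p).
Proof.
move=> v_range neq_vi neq_vj.
have neq_q : index v p != q.
  apply: contra_neq neq_vi; rewrite -index_swapped_i.
  by apply: (index_sigma_inj sort_w le_t_w) => //; lia.
have neq_qS : index v p != q.+1.
  apply: contra_neq neq_vj; rewrite -index_swapped_j.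
  by apply: (index_sigma_inj sort_w le_t_w) => //; lia.
lia.
Qed.

Lemma index_below_swapped v : 0 < v -> v < i -> q.+1 < index v p.
Proof.
move=> v_gt0 lt_vi.
have v_p : v \in p by rewrite (mem_sigma sort_w _ le_t_w); lia.
have /orP[before|//] : (index v p < q) || (q.+1 < index v p).
  by apply: index_swapped_other; lia.
(* [v j i] right after the swap *)
case: (sigma_no132 (k := t.+1) (a := index v p) (b := q) (c := q.+1)); try lia.
rewrite nth_swapped_sigmaS_q nth_swapped_sigmaS_qS nth_sigmaS // tswap_id.
- by rewrite nth_index //; lia.
- lia.
- lia.
Qed.

Lemma index_above_swapped v : j < v -> v <= n -> q.+1 < index v p.
Proof.
move=> lt_jv v_le.
have /orP[before|//] : (index v p < q) || (q.+1 < index v p).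
  by apply: index_swapped_other; lia.
have v_before_i : index v p < index i p by rewrite index_swapped_i.
have [m lt_mt [idx_i_m idx_v_m]] :=
  inverting_step sort_w i_gt0 (ltn_trans lt_ij lt_jv) v_le le_t_w v_before_i.
have le_m_w : m <= size w by lia.
have /andP[wm_gt0 _] := letter_range sort_w (ltn_trans lt_mt lt_t_w).
have i_before_j : index i (sigma n w m) < index j (sigma n w m).
  rewrite (index_sigma_ltNgt sort_w le_m_w); try lia.
  apply/negP => /(inversion_persistent sort_w i_gt0 lt_ij j_le (ltnW lt_mt) le_t_w).
  by rewrite index_swapped_i index_swapped_j; lia.
have j_m : j \in sigma n w m by rewrite (mem_sigma sort_w _ le_m_w); lia.
have lt_jn : index j (sigma n w m) < n.
  by rewrite -[X in _ < X](size_sigma sort_w le_m_w) index_mem.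
have neq_vj : index v (sigma n w m) != index j (sigma n w m).
  by apply/eqP => /(index_sigma_inj sort_w le_m_w) eq_vj; lia.
(* [i v j] at the earlier step where [v] overtook [i] *)
case: (sigma_no132 (k := m) (a := (nth 0 w m).-1) (b := nth 0 w m)
                  (c := index j (sigma n w m))); try lia.
by rewrite -idx_i_m -idx_v_m !nth_index ?(mem_sigma sort_w _ le_m_w); lia.
Qed.

Lemma index_between_swapped v : i < v -> v < j -> index v p < q.
Proof.
move=> lt_iv lt_vj.
have v_p : v \in p by rewrite (mem_sigma sort_w _ le_t_w); lia.
have lt_rn : index v p < n by rewrite -[X in _ < X](size_sigma sort_w le_t_w) index_mem.
have /orP[//|after] : (index v p < q) || (q.+1 < index v p).
  by apply: index_swapped_other; lia.
(* [i j v] just before the swap *)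
case: (sigma_no132 (k := t) (a := q) (b := q.+1) (c := index v p)); try lia.
by rewrite nth_index // prednK // nth_i nth_j; lia.
Qed.

Lemma mem_take_swapped v : (v \in take q p) = (i < v < j).
Proof.
apply/idP/idP => [v_take|/andP[lt_iv lt_vj]]; last first.
  by rewrite in_take_leq ?size_sigma ?index_between_swapped //; lia.
have v_p : v \in p := mem_take v_take.
move: v_take; rewrite in_take_leq ?size_sigma //; last lia.
move: v_p; rewrite (mem_sigma sort_w _ le_t_w) => /andP[v_gt0 v_le] before.
case: (ltngtP v i) => [lt_vi|lt_iv|eq_vi].
- by have := index_below_swapped v_gt0 lt_vi; lia.
- case: (ltngtP v j) => [//|lt_jv|eq_vj].
    by have := index_above_swapped lt_jv v_le; lia.
  by move: before; rewrite eq_vj index_swapped_j; lia.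
- by move: before; rewrite eq_vi index_swapped_i; lia.
Qed.

Lemma letter_of_swap : nth 0 w t = j - i.
Proof.
have perm_take : perm_eq (take q p) (iota i.+1 (j - i.+1)).
  apply: uniq_perm; rewrite ?take_uniq ?uniq_sigma ?iota_uniq // => v.
  by rewrite mem_take_swapped mem_iota; apply/idP/idP; lia.
have := perm_size perm_take; rewrite size_iota size_takel ?size_sigma //; lia.
Qed.

End Avoiding132.

Theorem mainTheorem7 (n : nat) (w : seq nat) (i j : nat) :
  avoiding132_network n w -> 1 <= i -> i < j -> j <= n ->
  (exists k, [/\ 1 <= k, k <= size w & swaps_at n w k i j]) /\
  (forall k, 1 <= k -> k <= size w -> swaps_at n w k i j ->
     nth 0 w k.-1 = j - i).
Proof.
case=> sort_w avoid_w i_gt0 lt_ij j_le; split.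
- have [|m lt_m_w [idx_i idx_j]] := inverting_step sort_w i_gt0 lt_ij j_le (leqnn _).
    by case: (sort_w) => _ [_ ->]; rewrite !index_rev_iota; lia.
  exists m.+1; split => //; left.
  by rewrite /entry /= -idx_i -idx_j !nth_index ?(mem_sigma sort_w _ (ltnW lt_m_w)); lia.
- case=> [//|t] _ lt_t_w; rewrite /swaps_at /entry !succnK.
  case=> [[nth_i nth_j]|[nth_j nth_i]].
    exact: (letter_of_swap sort_w avoid_w lt_t_w nth_i nth_j).
  by have := sigma_ascent sort_w lt_t_w; rewrite nth_i nth_j; lia.
Qed.
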